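(* Let $k$ be an algebraically closed field with $\operatorname{char}(k)\nmid(d+1)!$, $V$ an $n$-dimensional $k$-vector space, $S=\operatorname{Sym}V$. Suppose $f,g\in S_{d+1}$ are nonzero forms with $\langle\nabla g\rangle\subset\langle\nabla f\rangle$ (equivalently $J_g\subset J_f$). Then either $g=\lambda f$ for some $\lambda\in k$, or $f$ is an LDS form, or $f$ is a direct sum.
   Context: $\langle\nabla f\rangle$ is the $k$-span of $\partial f/\partial x_1,\dots,\partial f/\partial x_n$ and $J_f$ is the ideal they generate. A form $f$ is a direct sum if $V=U\oplus W$ and $f=f_1+f_2$ with nonzero $f_1\in\operatorname{Sym}^{d+1}U$, $f_2\in\operatorname{Sym}^{d+1}W$. A form $f$ is LDS if, after a linear change of variables, $f=\sum_{i=1}^{\ell}x_i\,\frac{\partial H(x_{\ell+1},\dots,x_{2\ell})}{\partial x_{\ell+i}}+G(x_{\ell+1},\dots,x_n)$ with $H,G$ forms of degree $d+1$ in $\ell$ and $n-\ell$ variables; here any non-concise form (one expressible in fewer than $n$ variables after a linear change) is regarded as an LDS form (the case $H=0$). *)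

From HB Require Import structures.
From mathcomp Require Import all_boot all_algebra.
From mathcomp Require Import finmap.
From mathcomp Require Import mpoly.

Set Implicit Arguments.
Unset Strict Implicit.
Unset Printing Implicit Defensive.

Import GRing.Theory.
Local Open Scope ring_scope.

(* Sym V is modelled as {mpoly k[n]} (coordinates x_0,...,x_{n-1} w.r.t. a
   basis of V); forms of degree d+1 are (d.+1).-homog polynomials. *)

Definition lin_change (k : fieldType) (n : nat) (A : 'M[k]_n)
  (p : {mpoly k[n]}) : {mpoly k[n]} :=
  p \mPo [tuple \sum_(j < n) A i j *: 'X_j | i < n].

Definition vars_in (k : fieldType) (n : nat) (P : pred 'I_n)
  (p : {mpoly k[n]}) : Prop :=
  forall m, m \in msupp p -> forall i : 'I_n, ~~ P i -> m i = 0%N.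

Definition grad_span_sub (k : fieldType) (n : nat) (g f : {mpoly k[n]}) : Prop :=
  forall i : 'I_n, exists c : 'I_n -> k,
    g^`M(i) = \sum_(j < n) c j *: f^`M(j).

(* f (of degree d+1) is a direct sum: after a linear change of variables
   (i.e. choosing a basis adapted to V = U (+) W), f = f1 + f2 with f1, f2
   nonzero forms of degree d+1 in complementary sets of variables. *)
Definition direct_sum (k : fieldType) (n d : nat) (f : {mpoly k[n]}) : Prop :=
  exists (A : 'M[k]_n) (P : pred 'I_n) (f1 f2 : {mpoly k[n]}),
    A \in unitmx /\ f1 != 0 /\ f2 != 0 /\
    f1 \is d.+1.-homog /\ f2 \is d.+1.-homog /\
    vars_in P f1 /\ vars_in (predC P) f2 /\
    lin_change A f = f1 + f2.

(* f is LDS: after a linear change of variables,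
   f = \sum_{i<l} x_i * dH/dx_{l+i} + G, with H a form of degree d+1 in
   x_l..x_{2l-1}, G a form of degree d+1 in x_l..x_{n-1}, and l >= 1
   (H = 0 covers the non-concise forms). Indices are 0-based. *)
Definition LDS (k : fieldType) (n d : nat) (f : {mpoly k[n]}) : Prop :=
  exists (l : nat) (A : 'M[k]_n) (H G : {mpoly k[n]}),
    (0 < l)%N /\ (2 * l <= n)%N /\ A \in unitmx /\
    H \is d.+1.-homog /\ G \is d.+1.-homog /\
    vars_in (fun i : 'I_n => (l <= i < 2 * l)%N) H /\
    vars_in (fun i : 'I_n => (l <= i)%N) G /\
        lin_change A f =
          \sum_(i < n | (i < l)%N) \sum_(j < n | j == (l + i)%N :> nat)
              'X_i * H^`M(j) + G.

(* Write the partials of g as [g_i = sum_j C_ij f_j].  Since the second partials of g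
   commute, the matrix [C * Hess f] is symmetric, hence so is [q(C) * Hess f] for every
   polynomial q, and this property is transported along linear changes of variables.
   Over an algebraically closed field either C is scalar, or k[C] contains an idempotent
   E other than 0 and 1, or a nonzero N with N^2 = 0.
   - If C = mu, all partials of g - mu f vanish, so g = mu f by Euler's formula.
   - In a basis where E = diag(1,..,1,0,..,0), symmetry of [E * Hess f] kills the mixed
     partials between the two blocks of variables, so f = f1 + f2 with f1, f2 in
     disjoint variables: f is a direct sum, or f is not concise if some fi = 0.
   - In a basis where N is the shift matrix of rank l, symmetry of [N * Hess f] says
     d_i d_j f = 0 for i < l and j outside [l, 2l), and d_i d_(l+j) f = d_j d_(l+i) f.
     Then H = (d+1)^-1 sum_(i<l) x_(l+i) d_i f only involves x_l..x_(2l-1) and satisfies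
     d_(l+i) H = d_i f, while G = f - sum_(i<l) x_i d_i f does not involve x_0..x_(l-1):
     this is the LDS shape f = sum_(i<l) x_i d_(l+i) H + G.
   The characteristic assumption makes 1, ..., d+1 invertible in k, which is what
   Euler's formula and the coefficient comparisons need. *)

From HB Require Import structures.
From mathcomp Require Import all_boot all_algebra perm.
From mathcomp Require Import finmap mpoly ring zify.

Set Implicit Arguments.
Unset Strict Implicit.
Unset Printing Implicit Defensive.
Import GRing.Theory.
Local Open Scope ring_scope.

(** * Partial derivatives and Euler's formula *)

Section MPolyDerivatives.
Variables (R : comRingType) (n : nat).
Implicit Types (p : {mpoly R[n]}) (m : 'X_{1..n}).

Lemma mdeg_ge m i : (m i <= mdeg m)%N.
Proof. by rewrite mdegE (bigD1 i) //= leq_addr. Qed.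

Lemma mderiv_sum (I : Type) (r : seq I) (P : pred I) (F : I -> {mpoly R[n]}) j :
  (\sum_(i <- r | P i) F i)^`M(j) = \sum_(i <- r | P i) (F i)^`M(j).
Proof. exact: raddf_sum. Qed.

Lemma mderivXU i j : ('X_i : {mpoly R[n]})^`M(j) = (i == j)%:R.
Proof.
rewrite mderivX mnm1E; case: eqP => [->|_]; last by rewrite scale0r.
by rewrite -{1}[U_(j)%MM]add0m addmK mpolyX0 scale1r.
Qed.

Lemma dhomog_mderiv e p i : p \is e.+1.-homog -> p^`M(i) \is e.-homog.
Proof.
move=> /dhomogP hp; apply/dhomogP => m; rewrite mcoeff_msupp mcoeff_mderiv.
have [->|nz] := eqVneq (p@_(m + U_(i))) 0; first by rewrite mul0rn eqxx.
have : mdeg (m + U_(i))%MM = e.+1 by apply: hp; rewrite mcoeff_msupp.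
by rewrite mdegD mdeg1 addn1 => -[].
Qed.

Lemma dhomogX1 i : ('X_i : {mpoly R[n]}) \is 1.-homog.
Proof. by rewrite dhomogX; apply/eqP; exact: mdeg1. Qed.

Lemma dhomogX1M e i p : p \is e.-homog -> 'X_i * p \is e.+1.-homog.
Proof. exact: dhomogM (dhomogX1 i). Qed.

Lemma sum_X_mderiv p :
  \sum_i 'X_i * p^`M(i) = \sum_(m <- msupp p) ((mdeg m)%:R * p@_m) *: 'X_[m].
Proof.
rewrite /mderiv; under eq_bigr do rewrite mulr_sumr.
rewrite exchange_big /=; apply: eq_bigr => m _.
rewrite mdegE natr_sum mulr_suml scaler_suml; apply: eq_bigr => i _.
rewrite -scalerAr; have [->|hi] := posnP (m i); first by rewrite !mul0r !scale0r.
by rewrite -mpolyXD addmC submK // lep1mP -lt0n.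
Qed.

Lemma euler_dhomog e p : p \is e.-homog -> \sum_i 'X_i * p^`M(i) = e%:R *: p.
Proof.
move=> /dhomogP hp; rewrite sum_X_mderiv {3}[p]mpolyE scaler_sumr.
by rewrite !big_seq; apply: eq_bigr => m hm; rewrite hp // scalerA.
Qed.

End MPolyDerivatives.

(** * Composition and linear changes of variables *)

Section Composition.
Variables (R : comRingType) (n m : nat) (lq : n.-tuple {mpoly R[m]}).

Lemma comp_mpolyA (p : {mpoly R[n]}) k (lr : m.-tuple {mpoly R[k]}) :
  (p \mPo lq) \mPo lr = p \mPo [tuple tnth lq i \mPo lr | i < n].
Proof.
rewrite (comp_mpolyEX p lq) (comp_mpolyEX p) raddf_sum /=; apply: eq_bigr => mm _.
rewrite comp_mpolyZ !comp_mpolyX rmorph_prod; congr (_ *: _); apply: eq_bigr => i _.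
by rewrite rmorphXn tnth_map tnth_ord_tuple.
Qed.

Lemma dhomog_comp_mpoly e (p : {mpoly R[n]}) : (forall i, tnth lq i \is 1.-homog) ->
  p \is e.-homog -> p \mPo lq \is e.-homog.
Proof.
move=> hlq /dhomogP hp; rewrite comp_mpolyEX big_seq; apply: rpred_sum => mm hm.
apply: rpredZ; have <- : mdeg mm = e := hp mm hm.
rewrite comp_mpolyX mdegE; apply: (big_rec2 (fun e (q : {mpoly R[m]}) => q \is e.-homog)).
  exact: dhomog1.
by move=> i e' q _ hq; apply: dhomogM hq; rewrite -[X in X.-homog]mul1n; apply: dhomogMn.
Qed.

Lemma mderiv_comp_mpoly (p : {mpoly R[n]}) j :
  (p \mPo lq)^`M(j) = \sum_(l < n) (tnth lq l)^`M(j) * (p^`M(l) \mPo lq).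
Proof.
pose chain q := (q \mPo lq)^`M(j) = \sum_(l < n) (tnth lq l)^`M(j) * (q^`M(l) \mPo lq).
have chainD q r : chain q -> chain r -> chain (q + r).
  rewrite /chain => hq hr; rewrite raddfD /= mderivD hq hr -big_split /=.
  by apply: eq_bigr => l _; rewrite mderivD raddfD /= mulrDr.
have chainZ c q : chain q -> chain (c *: q).
  rewrite /chain => hq; rewrite comp_mpolyZ mderivZ hq scaler_sumr.
  by apply: eq_bigr => l _; rewrite mderivZ comp_mpolyZ scalerAr.
have chainM q r : chain q -> chain r -> chain (q * r).
  rewrite /chain => hq hr; rewrite rmorphM /= mderivM hq hr.
  rewrite mulr_suml mulr_sumr -big_split /=; apply: eq_bigr => l _.
  by rewrite mderivM rmorphD /= !rmorphM /= mulrDr !mulrA [_ * (q \mPo lq)]mulrC.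
have chain1 : chain 1.
  rewrite /chain -mpolyC1 comp_mpolyC mderivC big1 // => l _.
  by rewrite mderivC raddf0 mulr0.
have chainX i : chain 'X_i.
  rewrite /chain comp_mpolyXU (bigD1 i) //= big1 ?addr0 => [|l /negPf hl].
    by rewrite mderivXU eqxx comp_mpoly1 mulr1 -tnth_nth.
  by rewrite mderivXU eq_sym hl raddf0 mulr0.
suff : chain p by [].
elim/mpolyind: p => [|c mm p _ _ hp].
  by rewrite /chain raddf0 mderiv0 big1 // => l _; rewrite mderiv0 raddf0 mulr0.
apply: chainD hp; apply: chainZ; rewrite mpolyXE_id.
apply: (big_ind chain chain1 chainM) => i _.
elim: (mm i) => [|e ih]; first by rewrite expr0.
by rewrite exprS; apply: chainM (chainX i) ih.
Qed.

End Composition.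

Section LinearChange.
Variables (k : fieldType) (n : nat).
Implicit Types (A B : 'M[k]_n) (p : {mpoly k[n]}).

Definition lin_tuple A : n.-tuple {mpoly k[n]} := [tuple \sum_(j < n) A i j *: 'X_j | i < n].

Lemma lin_changeE A p : lin_change A p = p \mPo lin_tuple A.
Proof. by []. Qed.

Lemma mderiv_lin_tuple A i j : (tnth (lin_tuple A) i)^`M(j) = (A i j)%:MP.
Proof.
rewrite tnth_map tnth_ord_tuple raddf_sum (bigD1 j) //= big1 => [|l /negPf hl].
  by rewrite mderivZ mderivXU eqxx addr0 -alg_mpolyC.
by rewrite mderivZ mderivXU hl scaler0.
Qed.

Lemma mderiv_lin_change A p j :
  (lin_change A p)^`M(j) = \sum_(l < n) (A l j)%:MP * lin_change A p^`M(l).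
Proof.
by rewrite mderiv_comp_mpoly; apply: eq_bigr => l _; rewrite mderiv_lin_tuple.
Qed.

Lemma lin_change_mulmx A B p : lin_change B (lin_change A p) = lin_change (A *m B) p.
Proof.
rewrite !lin_changeE comp_mpolyA; congr (p \mPo _); apply: eq_from_tnth => i.
rewrite !tnth_map !tnth_ord_tuple raddf_sum /=.
under eq_bigr do rewrite comp_mpolyZ comp_mpolyXU -tnth_nth tnth_map tnth_ord_tuple scaler_sumr.
rewrite exchange_big /=; apply: eq_bigr => l _; rewrite mxE scaler_suml.
by apply: eq_bigr => j _; rewrite scalerA.
Qed.

Lemma dhomog_lin_change e A p : p \is e.-homog -> lin_change A p \is e.-homog.
Proof.
apply: dhomog_comp_mpoly => i; rewrite tnth_map tnth_ord_tuple.
by apply: rpred_sum => j _; apply: rpredZ; apply: dhomogX1.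
Qed.

End LinearChange.

(** * Forms when 1, ..., D are invertible *)

Lemma natr_neq0_pchar_ndvd_fact (k : fieldType) D :
  (forall p, p \in [pchar k] -> ~~ (p %| D`!)%N) ->
  forall a, (0 < a <= D)%N -> (a%:R : k) != 0.
Proof.
move=> hD a /andP[a0 aD]; apply/negP => /eqP a_eq0.
have [p hp] := natf0_pchar a0 (introT eqP a_eq0).
have := hD p hp; rewrite (dvdn_trans _ (dvdn_fact (introT andP (conj a0 aD)))) //.
by rewrite (dvdn_pcharf hp) a_eq0.
Qed.

Section VarsIn.
Variables (k : fieldType) (n : nat).
Implicit Types (p : {mpoly k[n]}) (P Q : pred 'I_n).

Lemma mderiv_vars_in Q p i : vars_in Q p -> ~~ Q i -> p^`M(i) = 0.
Proof.
move=> hv hi; rewrite /mderiv big_seq big1 // => m hm.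
by rewrite (hv m hm i hi) mul0r scale0r.
Qed.

Lemma msupp_sumX_filter (s : seq 'X_{1..n}) (P : pred 'X_{1..n}) (c : 'X_{1..n} -> k) m :
  m \in msupp (\sum_(m' <- s | P m') c m' *: ('X_[m'] : {mpoly k[n]})) -> (m \in s) && P m.
Proof.
apply: contraTT => hm; rewrite mcoeff_msupp negbK raddf_sum /= big_seq_cond big1 // => m'.
move=> /andP[hs hP]; rewrite mcoeffZ mcoeffX; case: eqP => [e|]; last by rewrite mulr0.
by move: hm; rewrite -e hs hP.
Qed.

End VarsIn.

Section SmallIntegersInvertible.
Variables (k : fieldType) (n D : nat).
Hypothesis natr_neq0 : forall a, (0 < a <= D)%N -> (a%:R : k) != 0.
Implicit Types (p : {mpoly k[n]}) (P Q : pred 'I_n).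

Lemma mderiv0_dhomog_eq0 e p : p \is e.-homog -> (0 < e <= D)%N ->
  (forall i, p^`M(i) = 0) -> p = 0.
Proof.
move=> hp he hd; have := euler_dhomog hp; rewrite big1 => [|i _]; last by rewrite hd mulr0.
by move/esym/eqP; rewrite scaler_eq0 (negbTE (natr_neq0 he)) => /eqP.
Qed.

Lemma vars_in_mderiv0 e Q p : p \is e.-homog -> (e <= D)%N ->
  (forall i, ~~ Q i -> p^`M(i) = 0) -> vars_in Q p.
Proof.
move=> /dhomogP hp he hd m hm i hi; apply/eqP; apply: contraT => hmi.
have hle : (U_(i) <= m)%MM by rewrite lep1mP.
have := congr1 (mcoeff (m - U_(i))%MM) (hd i hi).
rewrite mcoeff_mderiv submK // mcoeff0 mnmBE mnm1E eqxx subn1 prednK ?lt0n //.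
move/eqP; rewrite -mulr_natr mulf_eq0 (negbTE (natr_neq0 _)); last first.
  by rewrite lt0n hmi (leq_trans _ he) // -(hp m hm) mdeg_ge.
by rewrite orbF; move: hm; rewrite mcoeff_msupp => /negbTE ->.
Qed.

Lemma mixed_mderiv0_msupp e P p m i j : p \is e.-homog -> (e <= D)%N ->
  (forall i j, P i -> ~~ P j -> p^`M(i)^`M(j) = 0) ->
  m \in msupp p -> ~~ P i -> m i != 0%N -> P j -> m j = 0%N.
Proof.
move=> /dhomogP hp he hd hm hPi hmi hPj; apply/eqP; apply: contraT => hmj.
have hij : i != j by apply: contraNneq hPi => ->.
have m_le_D t : (m t <= D)%N by rewrite (leq_trans _ he) // -(hp m hm) mdeg_ge.
set m1 := (m - U_(j))%MM.
have e1 : (m1 + U_(j))%MM = m by rewrite submK // lep1mP.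
have hm1i : m1 i = m i by rewrite mnmBE mnm1E eq_sym (negbTE hij) subn0.
have e2 : (m1 - U_(i) + U_(i))%MM = m1 by rewrite submK // lep1mP hm1i.
have := congr1 (mcoeff (m1 - U_(i))%MM) (hd j i hPj hPi).
rewrite mcoeff_mderiv e2 mcoeff_mderiv e1 mcoeff0.
rewrite mnmBE mnm1E eqxx hm1i subn1 prednK ?lt0n //.
rewrite /m1 mnmBE mnm1E eqxx subn1 prednK ?lt0n // -mulrnA -mulr_natr natrM.
move/eqP; rewrite !mulf_eq0 !(negbTE (natr_neq0 _)) ?lt0n ?hmi ?hmj ?m_le_D //.
by rewrite !orbF; move: hm; rewrite mcoeff_msupp => /negbTE ->.
Qed.

Lemma mixed_mderiv0_split e P p : p \is e.-homog -> (e <= D)%N ->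
  (forall i j, P i -> ~~ P j -> p^`M(i)^`M(j) = 0) ->
  exists p1 p2 : {mpoly k[n]}, [/\ p1 \is e.-homog, p2 \is e.-homog,
    vars_in P p1, vars_in (predC P) p2 & p = p1 + p2].
Proof.
move=> hp he hd; pose inP (m : 'X_{1..n}) := [forall i, ~~ P i ==> (m i == 0%N)].
have hdeg := dhomogP _ _ _ hp.
exists (\sum_(m <- msupp p | inP m) p@_m *: 'X_[m]).
exists (\sum_(m <- msupp p | ~~ inP m) p@_m *: 'X_[m]); split.
- by apply/dhomogP => m /msupp_sumX_filter /andP[/hdeg].
- by apply/dhomogP => m /msupp_sumX_filter /andP[/hdeg].
- move=> m /msupp_sumX_filter /andP[_ /forallP h] i hi.
  by apply/eqP; have := h i; rewrite hi.
- move=> m /msupp_sumX_filter /andP[hm /forallPn[i]]; rewrite negb_imply => /andP[hPi hmi] j.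
  by rewrite /= negbK; apply: (mixed_mderiv0_msupp hp he hd hm hPi hmi).
- by rewrite {1}[p]mpolyE (bigID inP).
Qed.

End SmallIntegersInvertible.

(** * Matrix normal forms *)

Section ShiftMatrix.
Variables (R : nzRingType) (n l : nat).

Definition shift_mx : 'M[R]_n := \matrix_(r, s) ((r == (l + s)%N :> nat) && (s < l)%N)%:R.

Lemma mul_shift_mx_out (M : 'M[R]_n) (r c : 'I_n) :
  ~~ (l <= r < 2 * l)%N -> (shift_mx *m M) r c = 0.
Proof.
move=> hr; rewrite mxE big1 // => s _; rewrite mxE.
case: eqP => [e|_]; last by rewrite andFb mul0r.
have [hs|hs] := boolP (s < l)%N; last by rewrite andbF mul0r.
by move: hr; rewrite e leq_addr mul2n -addnn ltn_add2l hs.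
Qed.

Lemma mul_shift_mx_in (M : 'M[R]_n) (r s c : 'I_n) :
  r = (l + s)%N :> nat -> (s < l)%N -> (shift_mx *m M) r c = M s c.
Proof.
move=> e sl; rewrite mxE (bigD1 s) //= big1 => [|t ht].
  by rewrite mxE e eqxx sl mul1r addr0.
by rewrite mxE e eqn_add2l (inj_eq val_inj) eq_sym (negbTE ht) mul0r.
Qed.

End ShiftMatrix.

Lemma map_shift_mx (R S : nzRingType) (phi : {rmorphism R -> S}) n l :
  map_mx phi (shift_mx R n l) = shift_mx S n l.
Proof. by apply/matrixP => r s; rewrite !mxE rmorph_nat. Qed.

Section NormalForms.
Variables (k : fieldType) (n : nat).
Implicit Types (B E N : 'M[k]_n).

Lemma row_col_mx m1 m2 p (A1 : 'M[k]_(m1, p)) (A2 : 'M_(m2, p)) (i : 'I_(m1 + m2)) :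
  row i (col_mx A1 A2) = match split i with inl i1 => row i1 A1 | inr i2 => row i2 A2 end.
Proof. by apply/rowP => j; rewrite !mxE; case: (split i) => ?; rewrite mxE. Qed.

Lemma idempotent_diag_basis E : E *m E = E ->
  exists (B : 'M[k]_n) (P : pred 'I_n),
    B \in unitmx /\ B *m E = diag_mx (\row_i (P i)%:R) *m B.
Proof.
move=> hE; set M := col_mx E (1%:M - E).
have full : row_full M.
  rewrite -sub1mx; have -> : (1%:M : 'M[k]_n) = row_mx 1%:M 1%:M *m M.
    by rewrite mul_row_col !mul1mx addrC subrK.
  exact: submxMl.
exists (rowsub (fullrankfun full) M), (fun r => (fullrankfun full r < n)%N).
split; first exact: fullrowsub_unit.
apply/row_matrixP => r; rewrite !row_mul row_diag_mx -scalemxAl -rowE mxE row_rowsub.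
rewrite row_col_mx; case: splitP => i /= hi; rewrite -row_mul.
  by rewrite hE scale1r.
by rewrite mulmxBl mul1mx hE subrr row0 scale0r.
Qed.

Lemma rows_mul_shift_mx l B N :
  (forall r : 'I_n, ~~ (l <= r < 2 * l)%N -> row r B *m N = 0) ->
  (forall r s : 'I_n, r = (l + s)%N :> nat -> (s < l)%N -> row r B *m N = row s B) ->
  B *m N = shift_mx k n l *m B.
Proof.
move=> h_out h_in; apply/row_matrixP => r; apply/rowP => c; rewrite row_mul [RHS]mxE.
have [/andP[h1 h2]|hr] := boolP (l <= r < 2 * l)%N; last first.
  by rewrite h_out // mul_shift_mx_out // mxE.
have hs : (r - l < n)%N by rewrite (leq_ltn_trans (leq_subr _ _)).
have e : r = (l + Ordinal hs)%N :> nat by rewrite /= subnKC.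
have sl : (Ordinal hs < l)%N by rewrite /= ltn_subLR // addnn -mul2n.
by rewrite (h_in r (Ordinal hs)) // (mul_shift_mx_in _ c e sl) mxE.
Qed.

Lemma row_full_base_preimage_ker N (X : 'M[k]_(\rank N, n)) : row_base N = X *m N ->
  row_full (col_mx (row_base N) (col_mx X (row_base (kermx N :\: N)%MS))).
Proof.
move=> hX; set K := kermx N; set Y := row_base (K :\: N)%MS.
have eqB : (col_mx (row_base N) (col_mx X Y) :=: row_base N + (X + Y))%MS.
  apply: eqmx_trans (eqmx_sym (addsmxE _ _)) _.
  exact: adds_eqmx (eqmx_refl _) (eqmx_sym (addsmxE _ _)).
have K_sub : (K <= row_base N + (X + Y))%MS.
  rewrite -{1}(addsmx_diff_cap_eq K N) addsmx_sub; apply/andP; split.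
    by rewrite (submx_trans _ (addsmxSr _ _)) // (submx_trans _ (addsmxSr _ _)) // eq_row_base.
  by rewrite (submx_trans (capmxSr _ _)) // -{1}(eq_row_base N) addsmxSl.
rewrite -sub1mx eqB; apply/row_subP => i; set u := row i 1%:M.
have [w hw] : exists w, u *m N = w *m row_base N.
  by apply/submxP; rewrite eq_row_base submxMl.
have hker : (u - w *m X <= K)%MS by apply/sub_kermxP; rewrite mulmxBl hw hX mulmxA subrr.
rewrite -[u](subrK (w *m X)); apply: addmx_sub; first exact: submx_trans hker K_sub.
by rewrite (submx_trans (submxMl w X)) // (submx_trans (addsmxSl X Y)) // addsmxSr.
Qed.

(* The rows of B: a basis of the image of N, preimages of it, and a complement of the
   image in the kernel of N. *)
Lemma square_zero_shift_basis N : N *m N = 0 ->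
  (2 * \rank N <= n)%N /\
  exists2 B : 'M[k]_n, B \in unitmx & B *m N = shift_mx k n (\rank N) *m B.
Proof.
move=> hNN; set l := \rank N; set D := (kermx N :\: N)%MS.
have [X hX] : exists X, row_base N = X *m N by apply/submxP; rewrite eq_row_base.
have rkD : (l + \rank D)%N = (n - l)%N.
  have NK : (N <= kermx N)%MS by apply/sub_kermxP.
  rewrite -(mxrank_ker N) -(mxrank_cap_compl (kermx N) N); congr (_ + _)%N.
  by rewrite (capmx_idPr NK).
have dim : (l + (l + \rank D))%N = n by rewrite rkD subnKC // rank_leq_col.
split; first by rewrite -dim mul2n -addnn leq_add2l leq_addr.
set B0 := col_mx (row_base N) (col_mx X (row_base D)).
have rowB r : row r (castmx (dim, erefl n) B0) = row (cast_ord (esym dim) r) B0.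
  by apply/rowP => j; rewrite [LHS]mxE castmxE /= cast_ord_id [RHS]mxE.
exists (castmx (dim, erefl n) B0).
  by rewrite -row_full_unit row_full_castmx row_full_base_preimage_ker.
apply: rows_mul_shift_mx => [r hr | r s hrs hs]; rewrite !rowB !row_col_mx.
  case: splitP => i /= hi; first by rewrite -row_mul hX -mulmxA hNN mulmx0 row0.
  rewrite row_col_mx; case: splitP => i2 /= hi2.
    by move: hr; rewrite hi hi2 leq_addr mul2n -addnn ltn_add2l ltn_ord.
  apply/sub_kermxP; rewrite (submx_trans (row_sub _ _)) // eq_row_base diffmxSl //.
have si : forall i : 'I_(l + \rank D), r = (l + i)%N :> nat -> i = s :> nat.
  by move=> i; rewrite hrs => /eqP; rewrite eqn_add2l => /eqP.
case: splitP => i /= hi; first by move: (ltn_ord i); rewrite -hi hrs ltnNge leq_addr.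
rewrite row_col_mx; case: splitP => i2 /= hi2; last first.
  by move: hs; rewrite -(si i hi) hi2 ltnNge leq_addr.
rewrite -row_mul -hX; case: splitP => i3 /= hi3; last by move: hs; rewrite hi3 ltnNge leq_addr.
by congr row; apply: val_inj; rewrite /= -hi2 -hi3 si.
Qed.

End NormalForms.

Lemma nilpotent_square_zero_power (R : nzRingType) (M : R) a : M != 0 -> M ^+ a = 0 ->
  exists j, M ^+ j != 0 /\ M ^+ j * M ^+ j = 0.
Proof.
move=> M0; elim: a => [|a ih]; first by move/eqP; rewrite expr0 oner_eq0.
have [/ih//|Ma Ma1] := eqVneq (M ^+ a) 0; exists a; split => //.
case: a {ih} Ma Ma1 => [|a] Ma Ma1; first by move: M0; rewrite -[M]expr1 Ma1 eqxx.
by rewrite -exprD (_ : (a.+1 + a.+1 = a.+2 + a)%N) ?exprD ?Ma1 ?mul0r //; lia.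
Qed.

(* With [char_poly C = q * ('X - mu)^a] and [~~ root q mu], Bezout gives
   [u * ('X - mu)^a + v * q = 1], and [e = u * ('X - mu)^a] evaluates to the projection
   onto the generalized mu-eigenspace; it kills an eigenvector, so it is not 1. *)
Lemma eigen_primary_idempotent (k : fieldType) n (C : 'M[k]_n.+1) mu : eigenvalue C mu ->
  exists (e : {poly k}) (a : nat), [/\ horner_mx C e * horner_mx C e = horner_mx C e,
    horner_mx C e != 1 & (C - mu%:M) ^+ a * (1 - horner_mx C e) = 0].
Proof.
move=> eig; set p := char_poly C.
have p0 : p != 0 by rewrite monic_neq0 // char_poly_monic.
have [a [q q_mu hpq]] := multiplicity_XsubC p mu; rewrite p0 /= in q_mu.
have a0 : (0 < a)%N.
  case: a hpq => // hpq; move: eig; rewrite eigenvalue_root_char -/p hpq expr0 mulr1.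
  by rewrite (negbTE q_mu).
have /Bezout_eq1_coprimepP[[u v] /= huv] : coprimep (('X - mu%:P) ^+ a) q.
  by apply: coprimep_expl; rewrite coprimep_sym coprimep_XsubC.
have hM : horner_mx C ('X - mu%:P) = C - mu%:M by rewrite rmorphB /= horner_mx_X horner_mx_C.
have hC : horner_mx C p = 0 by apply: Cayley_Hamilton.
pose e := u * ('X - mu%:P) ^+ a.
have e_compl : 1 - e = v * q by rewrite -huv /e; ring.
exists e, a; split.
- have : horner_mx C e * (1 - horner_mx C e) = 0.
    rewrite -[1](rmorph1 (horner_mx C)) -rmorphB -rmorphM /=.
    have -> : e * (1 - e) = u * v * p by rewrite e_compl hpq /e; ring.
    by rewrite rmorphM /= hC mulr0.
  by rewrite mulrBr mulr1 => /eqP; rewrite subr_eq0 => /eqP.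
- apply/eqP => E1; have [w wC w0] := eigenvalueP eig.
  have wM : w *m (C - mu%:M) = 0 by rewrite mulmxBr wC mul_mx_scalar subrr.
  have : w *m horner_mx C e = 0.
    rewrite /e mulrC rmorphM rmorphXn /= hM -(subnKC a0) exprS -!mulmxE.
    by rewrite !mulmxA wM !mul0mx.
  by rewrite E1 mulmx1 => w_eq0; rewrite w_eq0 eqxx in w0.
- rewrite -hM -rmorphXn -[1](rmorph1 (horner_mx C)) -rmorphB -rmorphM /=.
  have -> : ('X - mu%:P) ^+ a * (1 - e) = v * p.
    by rewrite e_compl hpq; ring.
  by rewrite rmorphM /= hC mulr0.
Qed.

Lemma horner_mx_trichotomy (k : closedFieldType) n (C : 'M[k]_n.+1) :
  (exists mu, C = mu%:M) \/
  (exists q, [/\ horner_mx C q * horner_mx C q = horner_mx C q,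
                 horner_mx C q != 0 & horner_mx C q != 1]) \/
  (exists q, horner_mx C q != 0 /\ horner_mx C q * horner_mx C q = 0).
Proof.
have [mu eig] : exists mu, eigenvalue C mu.
  have [mu hmu] : exists mu, root (char_poly C) mu.
    by apply/closed_rootP; rewrite size_char_poly.
  by exists mu; rewrite eigenvalue_root_char.
have [e [a [hE E1 hMa]]] := eigen_primary_idempotent eig.
have [E0|E0] := eqVneq (horner_mx C e) 0; last by right; left; exists e.
have Ma0 : (C - mu%:M) ^+ a = 0 by move: hMa; rewrite E0 subr0 mulr1.
have [M0|M0] := eqVneq (C - mu%:M) 0.
  by left; exists mu; apply/eqP; rewrite -subr_eq0 M0.
have [j [Mj0 Mj_sq]] := nilpotent_square_zero_power M0 Ma0.
right; right; exists (('X - mu%:P) ^+ j).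
by rewrite rmorphXn rmorphB /= horner_mx_X horner_mx_C.
Qed.

(** * Matrices symmetrizing a Hessian *)

Section Hessian.
Variables (k : fieldType) (n : nat).
Implicit Types (p : {mpoly k[n]}) (A K : 'M[k]_n).
Local Notation mxC K := (map_mx (@mpolyC n k) K).

Definition hessian p : 'M[{mpoly k[n]}]_n := \matrix_(i, j) p^`M(i)^`M(j).

(* As the Hessian is symmetric, this says that [K * hessian p] is a symmetric matrix. *)
Definition symmetrizes K p := mxC K *m hessian p = hessian p *m (mxC K)^T.

Lemma tr_hessian p : (hessian p)^T = hessian p.
Proof. by apply/matrixP => i j; rewrite !mxE mderiv_comm. Qed.

Lemma symmetrizesP K p : symmetrizes K p ->
  forall r c, (mxC K *m hessian p) r c = (mxC K *m hessian p) c r.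
Proof. by move=> hK r c; rewrite {1}hK -{1}tr_hessian -trmx_mul mxE. Qed.

Lemma symmetrizes_grad (g p : {mpoly k[n]}) (c : 'I_n -> 'I_n -> k) :
  (forall i, g^`M(i) = \sum_j c i j *: p^`M(j)) -> symmetrizes (\matrix_(i, j) c i j) p.
Proof.
move=> hg; have hess_g i l : (mxC (\matrix_(i, j) c i j) *m hessian p) i l = g^`M(i)^`M(l).
  rewrite !mxE hg raddf_sum; apply: eq_bigr => j _.
  by rewrite !mxE /= mderivZ mul_mpolyC.
rewrite /symmetrizes -[in RHS]tr_hessian -trmx_mul.
by apply/matrixP => i l; rewrite [RHS]mxE !hess_g mderiv_comm.
Qed.

Lemma symmetrizesD K1 K2 p :
  symmetrizes K1 p -> symmetrizes K2 p -> symmetrizes (K1 + K2) p.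
Proof. by rewrite /symmetrizes map_mxD mulmxDl linearD /= mulmxDr => -> ->. Qed.

Lemma symmetrizes_scalar c p : symmetrizes c%:M p.
Proof. by rewrite /symmetrizes map_scalar_mx tr_scalar_mx mul_scalar_mx mul_mx_scalar. Qed.

Lemma symmetrizesM K1 K2 p : K1 *m K2 = K2 *m K1 ->
  symmetrizes K1 p -> symmetrizes K2 p -> symmetrizes (K1 *m K2) p.
Proof.
rewrite /symmetrizes => hc h1 h2.
by rewrite map_mxM -mulmxA h2 mulmxA h1 -mulmxA -trmx_mul -map_mxM hc map_mxM.
Qed.

Lemma hessian_lin_change A p :
  hessian (lin_change A p) = (mxC A)^T *m map_mx (comp_mpoly (lin_tuple A)) (hessian p) *m mxC A.
Proof.
apply/matrixP => i j; rewrite !mxE mderiv_lin_change raddf_sum /=.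
under eq_bigr do rewrite mderiv_mulC mderiv_lin_change.
under [RHS]eq_bigr do rewrite !mxE mulr_suml.
rewrite exchange_big /=; apply: eq_bigr => l _; rewrite mulr_sumr.
by apply: eq_bigr => m _; rewrite !mxE [_ * lin_change _ _]mulrC mulrA.
Qed.

Lemma symmetrizes_lin_change A K K' p : A^T *m K = K' *m A^T ->
  symmetrizes K p -> symmetrizes K' (lin_change A p).
Proof.
rewrite /symmetrizes hessian_lin_change => hA hK.
set phi := comp_mpoly (lin_tuple A); set a := mxC A; set H := map_mx phi (hessian p).
have phiC K0 : map_mx phi (mxC K0) = mxC K0.
  by apply/matrixP => i j; rewrite !mxE /phi comp_mpolyC.
have hKH : mxC K *m H = H *m (mxC K)^T.
  by have := congr1 (map_mx phi) hK; rewrite !map_mxM map_trmx !phiC.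
have haK : a^T *m mxC K = mxC K' *m a^T.
  by have := congr1 (map_mx (@mpolyC n k)) hA; rewrite !map_mxM map_trmx.
have hKa : (mxC K)^T *m a = a *m (mxC K')^T.
  by have := congr1 trmx haK; rewrite !trmx_mul trmxK.
by rewrite !mulmxA -haK -(mulmxA a^T) hKH !mulmxA -(mulmxA _ _ a) hKa !mulmxA.
Qed.

Lemma symmetrizes_diag (d : 'rV[k]_n) p : symmetrizes (diag_mx d) p ->
  forall i j, d 0 i != d 0 j -> p^`M(i)^`M(j) = 0.
Proof.
move=> /symmetrizesP hd i j dij; have := hd i j.
rewrite map_diag_mx !mul_diag_mx !mxE mderiv_comm => /eqP.
rewrite -subr_eq0 -mulrBl -rmorphB mulf_eq0 mpolyC_eq0 subr_eq0 (negbTE dij).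
by move/eqP.
Qed.

End Hessian.

Lemma symmetrizes_horner (k : fieldType) (n : nat) (C : 'M[k]_n.+1) (p : {mpoly k[n.+1]}) q :
  symmetrizes C p -> symmetrizes (horner_mx C q) p.
Proof.
move=> hC; elim/poly_ind: q => [|q c ih].
  by rewrite rmorph0 -(scale0r (1%:M : 'M[k]_n.+1)) scalemx1; apply: symmetrizes_scalar.
rewrite rmorphD rmorphM /= horner_mx_X horner_mx_C.
apply: symmetrizesD (symmetrizes_scalar _ _); rewrite -mulmxE.
by apply: symmetrizesM => //; rewrite !mulmxE; apply/esym/comm_mx_horner.
Qed.

Lemma symmetrizes_shift (k : fieldType) (n l : nat) (p : {mpoly k[n]}) :
  (2 * l <= n)%N -> symmetrizes (shift_mx k n l) p ->
  (forall i j : 'I_n, (i < l)%N -> ~~ (l <= j < 2 * l)%N -> p^`M(i)^`M(j) = 0) /\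
  (forall i j ri rj : 'I_n, (i < l)%N -> (j < l)%N ->
     ri = (l + i)%N :> nat -> rj = (l + j)%N :> nat -> p^`M(i)^`M(rj) = p^`M(j)^`M(ri)).
Proof.
move=> hl /symmetrizesP hS; rewrite map_shift_mx in hS; split.
  move=> i j hi hj; have hli : (l + i < n)%N.
    by rewrite (leq_trans _ hl) // mul2n -addnn ltn_add2l.
  have := hS (Ordinal hli) j; rewrite (mul_shift_mx_in _ (r := Ordinal hli) (s := i)) //.
  by rewrite mul_shift_mx_out // mxE.
move=> i j ri rj hi hj ei ej; have := hS ri rj.
by rewrite (mul_shift_mx_in _ (s := i)) // (mul_shift_mx_in _ (s := j)) // !mxE.
Qed.

(** * The LDS shape *)

Section LDSDecomposition.
Variables (k : fieldType) (n d l : nat) (p : {mpoly k[n.+1]}).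
Hypothesis natr_neq0 : forall a, (0 < a <= d.+1)%N -> (a%:R : k) != 0.
Hypothesis p_homog : p \is d.+1.-homog.
Hypothesis mderiv_out : forall i j : 'I_n.+1,
  (i < l)%N -> ~~ (l <= j < 2 * l)%N -> p^`M(i)^`M(j) = 0.
Hypothesis mderiv_swap : forall i j ri rj : 'I_n.+1, (i < l)%N -> (j < l)%N ->
  ri = (l + i)%N :> nat -> rj = (l + j)%N :> nat -> p^`M(i)^`M(rj) = p^`M(j)^`M(ri).

Local Notation window t := (l <= t < 2 * l)%N.

Let H := ((d.+1)%:R)^-1 *: \sum_(t < n.+1 | window t) 'X_t * p^`M(inord (t - l)%N).
Let G := p - \sum_(i < n.+1 | (i < l)%N) 'X_i * p^`M(i).

Lemma window_inord (t : 'I_n.+1) : window t ->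
  (inord (t - l)%N : 'I_n.+1) = (t - l)%N :> nat /\ (t - l < l)%N.
Proof.
case/andP=> h1 h2; split; last by rewrite ltn_subLR // addnn -mul2n.
by rewrite inordK // (leq_ltn_trans (leq_subr _ _)).
Qed.

Lemma mderiv_lds_potential (i j : 'I_n.+1) : (i < l)%N -> j = (l + i)%N :> nat ->
  H^`M(j) = p^`M(i).
Proof.
move=> hi ej; have jw : window j by rewrite ej leq_addr mul2n -addnn ltn_add2l.
rewrite mderivZ mderiv_sum /=; under eq_bigr do rewrite mderivM mderivXU.
rewrite big_split /= (bigD1 j) //= eqxx mul1r big1 ?addr0 => [|t /andP[_ /negbTE ->]];
  last by rewrite mul0r.
have -> : inord (j - l)%N = i by apply: val_inj; rewrite /= (window_inord jw).1 ej addKn.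
have -> : \sum_(t < n.+1 | window t) 'X_t * p^`M(inord (t - l)%N)^`M(j) =
          \sum_t 'X_t * p^`M(i)^`M(t).
  rewrite [RHS](bigID (fun t : 'I_n.+1 => window t)) /= [X in _ = _ + X]big1 ?addr0.
    apply: eq_bigr => t tw; have [e1 e2] := window_inord tw.
    rewrite -e1 in e2; rewrite (mderiv_swap (ri := t) (rj := j) e2 hi) //.
    by rewrite e1 subnKC //; case/andP: tw.
  by move=> t tw; rewrite mderiv_out // mulr0.
rewrite (euler_dhomog (dhomog_mderiv i p_homog)) -{1}[p^`M(i)]scale1r -scalerDl scalerA.
by rewrite addrC natr1 mulVf ?scale1r //; apply: natr_neq0; rewrite leqnn.
Qed.

Lemma lds_potential_homog : H \is d.+1.-homog.
Proof. by apply/rpredZ/rpred_sum => t _; apply/dhomogX1M/dhomog_mderiv. Qed.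

Lemma lds_remainder_homog : G \is d.+1.-homog.
Proof. by apply/rpredB/rpred_sum => // t _; apply/dhomogX1M/dhomog_mderiv. Qed.

Lemma lds_potential_vars : vars_in (fun t : 'I_n.+1 => window t) H.
Proof.
apply: (vars_in_mderiv0 natr_neq0 lds_potential_homog (leqnn _)) => t tw.
rewrite mderivZ mderiv_sum big1 ?scaler0 //= => t' t'w.
rewrite mderivM mderivXU (_ : (t' == t) = false); last by apply: contraNF tw => /eqP <-.
have [e1 e2] := window_inord t'w.
by rewrite mul0r add0r mderiv_out ?mulr0 // e1.
Qed.

Lemma lds_remainder_vars : vars_in (fun t : 'I_n.+1 => (l <= t)%N) G.
Proof.
apply: (vars_in_mderiv0 natr_neq0 lds_remainder_homog (leqnn _)) => t0.
rewrite -ltnNge => ht0; rewrite mderivB mderiv_sum /=.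
under eq_bigr do rewrite mderivM mderivXU.
rewrite big_split /= (bigD1 t0) //= eqxx mul1r big1 => [|t /andP[_ /negbTE ->]];
  last by rewrite mul0r.
rewrite big1 ?addr0 ?subrr // => t ht.
by rewrite mderiv_out ?mulr0 // negb_and -ltnNge ht0.
Qed.

Lemma lds_decomposition : (2 * l <= n.+1)%N ->
  p = \sum_(i < n.+1 | (i < l)%N) \sum_(j < n.+1 | j == (l + i)%N :> nat) 'X_i * H^`M(j) + G.
Proof.
move=> hl; rewrite /G addrCA -[LHS]addr0; congr (_ + _).
apply/esym/eqP; rewrite subr_eq0; apply/eqP/eq_bigr => i hi.
have hli : (l + i < n.+1)%N by rewrite (leq_trans _ hl) // mul2n -addnn ltn_add2l.
rewrite (big_pred1 (Ordinal hli)) => [|j]; last by rewrite /= -(inj_eq val_inj).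
by rewrite (mderiv_lds_potential (i := i) (j := Ordinal hli)).
Qed.

Lemma LDS_shape : (2 * l <= n.+1)%N -> exists H G : {mpoly k[n.+1]},
  [/\ H \is d.+1.-homog, G \is d.+1.-homog,
      vars_in (fun i : 'I_n.+1 => (l <= i < 2 * l)%N) H,
      vars_in (fun i : 'I_n.+1 => (l <= i)%N) G &
      p = \sum_(i < n.+1 | (i < l)%N) \sum_(j < n.+1 | j == (l + i)%N :> nat)
            'X_i * H^`M(j) + G].
Proof.
move=> hl; exists H, G; split; [exact: lds_potential_homog | exact: lds_remainder_homog |
  exact: lds_potential_vars | exact: lds_remainder_vars | exact: lds_decomposition].
Qed.

End LDSDecomposition.

(** * The three cases *)

Section Cases.
Variables (k : fieldType) (n d : nat).
Hypothesis natr_neq0 : forall a, (0 < a <= d.+1)%N -> (a%:R : k) != 0.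
Variable f : {mpoly k[n.+1]}.
Hypothesis f_homog : f \is d.+1.-homog.

Lemma eq_scale_of_scalar_grad (g : {mpoly k[n.+1]}) (c : 'I_n.+1 -> 'I_n.+1 -> k) mu :
  g \is d.+1.-homog -> (forall i, g^`M(i) = \sum_j c i j *: f^`M(j)) ->
  \matrix_(i, j) c i j = mu%:M -> g = mu *: f.
Proof.
move=> g_homog hg hc; apply/eqP; rewrite -subr_eq0; apply/eqP.
apply: (mderiv0_dhomog_eq0 natr_neq0 (e := d.+1)); rewrite ?leqnn ?rpredB ?rpredZ //.
have c_entry i j : c i j = mu *+ (i == j).
  by have := congr1 (fun M : 'M[k]_n.+1 => M i j) hc; rewrite !mxE.
move=> i; rewrite mderivB mderivZ hg (bigD1 i) //= big1 => [|j ji].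
  by rewrite c_entry eqxx addr0 subrr.
by rewrite c_entry eq_sym (negbTE ji) scale0r.
Qed.

Lemma LDS_of_vars_in (A : 'M[k]_n.+1) (Q : pred 'I_n.+1) i0 :
  (0 < n)%N -> A \in unitmx -> vars_in Q (lin_change A f) -> ~~ Q i0 -> LDS d f.
Proof.
(* After moving the missing variable to x_0, f has the LDS shape with l = 1 and H = 0. *)
move=> n0 hA hv hi0; set s : {perm 'I_n.+1} := tperm ord0 i0.
set G := lin_change (perm_mx s) (lin_change A f).
have G_homog : G \is d.+1.-homog by rewrite !dhomog_lin_change.
exists 1%N, (A *m perm_mx s), 0, G; split; first by []; split; first by [].
split; first by rewrite unitmx_mul hA unitmx_perm.
split; first exact: dhomog0; split; first exact: G_homog.
split; first by move=> m; rewrite msupp0.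
split.
- apply: (vars_in_mderiv0 natr_neq0 G_homog (leqnn _)) => t; rewrite -ltnNge ltnS leqn0.
  move=> /eqP t0; rewrite mderiv_lin_change big1 // => l _; rewrite !mxE.
  have [->|li0] := eqVneq l i0.
    by rewrite (mderiv_vars_in hv hi0) lin_changeE comp_mpoly0 mulr0.
  suff /negbTE -> : s l != t by rewrite mul0r.
  apply: contra li0 => /eqP slt; have : s l = ord0 by apply: val_inj; rewrite /= slt t0.
  by move/(congr1 s); rewrite tpermK tpermL => ->.
- rewrite /G lin_change_mulmx big1 ?add0r // => i _.
  by rewrite big1 // => j _; rewrite mderiv0 mulr0.
Qed.

Lemma LDS_or_direct_sum_of_idempotent (E : 'M[k]_n.+1) : symmetrizes E f ->
  E * E = E -> E != 0 -> E != 1 -> LDS d f \/ direct_sum d f.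
Proof.
move=> symE hE E0 E1; rewrite -mulmxE in hE.
have [B [P [hB hBE]]] := idempotent_diag_basis hE.
have E_const b : (forall i, P i = b) -> E = b%:R%:M.
  move=> Pb; rewrite -[E](mulKmx hB) hBE.
  have -> : diag_mx (\row_i (P i)%:R) = b%:R%:M :> 'M[k]_n.+1.
    by apply/matrixP => i j; rewrite !mxE Pb.
  by rewrite -scalar_mxC mulmxA mulVmx // mul1mx.
have [r1 Pr1] : exists r, P r.
  apply/existsP; apply: contraNT E0 => /existsPn nP.
  by rewrite (E_const false) ?raddf0 // => i; apply/negbTE.
have [r2 nPr2] : exists r, ~~ P r.
  apply/existsP; apply: contraNT E1 => /existsPn nP.
  by rewrite (E_const true) // => i; move/negPn: (nP i).
have n0 : (0 < n)%N.
  rewrite lt0n; apply: contraNneq nPr2 => n_eq0; rewrite (_ : r2 = r1) //; apply: val_inj.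
  by apply/eqP; rewrite /=; have := ltn_ord r1; have := ltn_ord r2; lia.
set q := lin_change B^T f.
have sym : symmetrizes (diag_mx (\row_i (P i)%:R)) q.
  by apply: symmetrizes_lin_change symE; rewrite trmxK.
have mixed i j : P i -> ~~ P j -> q^`M(i)^`M(j) = 0.
  by move=> Pi nPj; apply: (symmetrizes_diag sym); rewrite !mxE Pi (negbTE nPj) oner_neq0.
have [f1 [f2 [f1_homog f2_homog v1 v2 hq]]] :=
  mixed_mderiv0_split natr_neq0 (dhomog_lin_change _ f_homog) (leqnn _) mixed.
have hBt : B^T \in unitmx by rewrite unitmx_tr.
have [f1_0|f1_neq0] := eqVneq f1 0.
  left; apply: (LDS_of_vars_in n0 hBt (Q := predC P) (i0 := r1)); last by rewrite /= Pr1.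
  by rewrite hq f1_0 add0r.
have [f2_0|f2_neq0] := eqVneq f2 0.
  by left; apply: (LDS_of_vars_in n0 hBt (Q := P) (i0 := r2)); rewrite ?hq ?f2_0 ?addr0.
by right; exists B^T, P, f1, f2.
Qed.

Lemma LDS_of_square_zero (N : 'M[k]_n.+1) : symmetrizes N f ->
  N != 0 -> N * N = 0 -> LDS d f.
Proof.
move=> symN N0 hNN; rewrite -mulmxE in hNN.
have [hl [B hB hBN]] := square_zero_shift_basis hNN.
have sym : symmetrizes (shift_mx k n.+1 (\rank N)) (lin_change B^T f).
  by apply: symmetrizes_lin_change symN; rewrite trmxK.
have [out swap] := symmetrizes_shift hl sym.
have [H [G [H_homog G_homog vH vG hf]]] :=
  LDS_shape natr_neq0 (dhomog_lin_change _ f_homog) out swap hl.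
exists (\rank N), B^T, H, G; do !split => //; last by rewrite unitmx_tr.
by rewrite lt0n mxrank_eq0.
Qed.

End Cases.

Theorem proposition3p3 (k : closedFieldType) (n d : nat)
  (Hchar : forall p : nat, p \in [pchar k] -> ~~ (p %| (d.+1)`!)%N)
  (f g : {mpoly k[n]})
  (Hf : f \is d.+1.-homog) (Hg : g \is d.+1.-homog)
  (Hf0 : f != 0) (Hg0 : g != 0)
  (Hsub : grad_span_sub g f) :
  (exists lambda : k, g = lambda *: f) \/ LDS d f \/ direct_sum d f.
Proof.
have natr_neq0 := natr_neq0_pchar_ndvd_fact Hchar.
case: n f g Hf Hg Hf0 Hg0 Hsub => [|n] f g Hf Hg Hf0 Hg0 Hsub.
  by move: Hf0; rewrite (mderiv0_dhomog_eq0 natr_neq0 Hf) ?eqxx ?leqnn // => -[].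
have [c hc] := fin_all_exists Hsub.
have symC := symmetrizes_grad hc.
have [[mu hmu] | [[q [hE E0 E1]] | [q [N0 hN]]]] := horner_mx_trichotomy (\matrix_(i, j) c i j).
- by left; exists mu; apply: (eq_scale_of_scalar_grad natr_neq0 Hf Hg hc).
- by right; apply: (LDS_or_direct_sum_of_idempotent natr_neq0 Hf (symmetrizes_horner q symC)).
- by right; left; apply: (LDS_of_square_zero natr_neq0 Hf (symmetrizes_horner q symC)).
Qed.
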